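(* Order $S_n$ by $v\le w$ iff $\iota_k(v)\le\iota_k(w)$ for all $k$. Then $w\in S_n$ covers $v\in S_n$ in this order if and only if there exist $i<k$ such that: $w(j)=v(j)$ for all $j\notin\{i,k\}$; $v(i)=w(k)<w(i)=v(k)$; and $w(j)<w(k)$ for every $i<j<k$.
   Context: Permutations are written in one-line notation. The inversion table of $w\in S_n$ is $\iota(w)=(\iota_1(w),\dots,\iota_n(w))$ with $\iota_k(w)=\#\{i<w^{-1}(k):w(i)>k\}$. *)

From mathcomp Require Import all_boot all_order all_fingroup.
Set Implicit Arguments. Unset Strict Implicit. Unset Printing Implicit Defensive.
Import GroupScope.

(* Values and positions are 0-based: 'I_n = {0,...,n-1} (a shift of {1..n}),
   which preserves all comparisons used below. *)

Definition inv_entry (n : nat) (w : 'S_n) (k : 'I_n) : nat :=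
  #|[set i : 'I_n | (i < (w^-1)%g k)%N && (k < w i)%N]|.

Definition inv_le (n : nat) (v w : 'S_n) : Prop :=
  forall k : 'I_n, (inv_entry v k <= inv_entry w k)%N.

Definition inv_lt (n : nat) (v w : 'S_n) : Prop := inv_le v w /\ v <> w.

Definition inv_covers (n : nat) (v w : 'S_n) : Prop :=
  inv_lt v w /\ ~ (exists u : 'S_n, inv_lt v u /\ inv_lt u w).

From mathcomp Require Import all_boot all_order all_fingroup.
From mathcomp Require Import zify.
Set Implicit Arguments. Unset Strict Implicit. Unset Printing Implicit Defensive.

(* Exchanging the values a = v p < v q at positions p < q, when every value
   strictly between the two positions is below a, raises iota_a by one and
   leaves the rest of the inversion table unchanged.  As the inversion table
   determines the permutation, every u with v <= u <= w then equals v or w,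
   so the exchange is a cover.  Conversely, if v < w, choose a with
   iota_a(v) < iota_a(w).  Some value larger than a follows a in v, since
   otherwise iota_a(v) would already be maximal; exchanging a with the first
   such value gives u with v < u <= w, hence u = w when w covers v. *)

Section InversionTable.

Variable n : nat.
Implicit Types (v w u : 'S_n) (i j k p q : 'I_n).

Lemma inv_entryE v k :
  inv_entry v k = #|[set i : 'I_n | (i < (v^-1)%g k)%N && (k <= v i)%N]|.
Proof.
apply: eq_card => i; rewrite !inE; case: ltnP => //= lt_i.
rewrite [RHS]leq_eqVlt; case: eqP => //= /val_inj k_vi.
by move: lt_i; rewrite k_vi permK ltnn.
Qed.

(* Before position v^-1 k, both permutations carry values >= k at the same
   positions; w has one more such position, v^-1 k itself. *)
Lemma inv_entry_lt v w k :
  (forall i, (v i < k)%N = (w i < k)%N) ->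
  ((v^-1)%g k < (w^-1)%g k)%N -> (inv_entry v k < inv_entry w k)%N.
Proof.
move=> same_below lt_pos; rewrite !inv_entryE.
apply: proper_card; apply/properP; split.
  apply/subsetP => i; rewrite !inE => /andP[lt_i ge_k].
  by rewrite (ltn_trans lt_i lt_pos) leqNgt -same_below -leqNgt.
exists ((v^-1)%g k); rewrite !inE ?ltnn // lt_pos leqNgt -same_below.
by rewrite permKV ltnn.
Qed.

Lemma inv_entry_inj v w : (forall k, inv_entry v k = inv_entry w k) -> v = w.
Proof.
move=> eq_vw; apply: invg_inj; apply/permP => j.
suff agree_below m : forall k, (k < m)%N -> (v^-1)%g k = (w^-1)%g k.
  exact: agree_below (ltn_ord j).
elim: m => [//|m IHm] k; rewrite ltnS leq_eqVlt => /orP[/eqP k_m|]; last exact: IHm.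
have same_below i : (v i < k)%N = (w i < k)%N.
  rewrite k_m; apply/idP/idP => lt_m.
  - by have := IHm _ lt_m; rewrite permK => ->; rewrite permKV.
  - by have := IHm _ lt_m; rewrite permK => <-; rewrite permKV.
case: (ltngtP ((v^-1)%g k) ((w^-1)%g k)) => [lt_vw|lt_wv|/val_inj //].
- by have := inv_entry_lt same_below lt_vw; rewrite eq_vw ltnn.
- have same_below' i : (w i < k)%N = (v i < k)%N by rewrite same_below.
  by have := inv_entry_lt same_below' lt_wv; rewrite eq_vw ltnn.
Qed.

Section Swap.

Variables (v : 'S_n) (p q : 'I_n).
Hypotheses (lt_pq : (p < q)%N) (lt_vpq : (v p < v q)%N).
Hypothesis below_vp : forall j, (p < j)%N -> (j < q)%N -> (v j < v p)%N.

Local Notation u := (tperm p q * v)%g.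

Lemma swapVE k : (u^-1)%g k = tperm p q ((v^-1)%g k).
Proof. by rewrite invMg tpermV permM. Qed.

Lemma inv_entry_swap_vp : inv_entry u (v p) = (inv_entry v (v p)).+1.
Proof.
rewrite /inv_entry swapVE permK tpermL.
have -> : [set i : 'I_n | (i < q)%N && (v p < u i)%N]
        = p |: [set i : 'I_n | (i < p)%N && (v p < v i)%N].
  apply/setP => i; rewrite !inE permM; case: tpermP => [->|->|/eqP/negbTE ne_ip _].
  - by rewrite eqxx lt_pq lt_vpq.
  - by rewrite ltnn (gtn_eqF lt_pq : (q == p) = false) /= ltnNge (ltnW lt_pq).
  rewrite ne_ip /=; case: (ltngtP i p) => [lt_ip|lt_pi|/val_inj/eqP].
  - by rewrite (ltn_trans lt_ip lt_pq).
  - by case: ltnP => //= lt_iq; rewrite ltnNge ltnW ?below_vp.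
  - by rewrite ne_ip.
by rewrite cardsU1 inE ltnn.
Qed.

Lemma inv_entry_swap_vq : inv_entry u (v q) = inv_entry v (v q).
Proof.
rewrite /inv_entry swapVE permK tpermR; apply: eq_card => i; rewrite !inE permM.
case: tpermP => [->|->|ne_ip _].
- by rewrite ltnn lt_pq /= ltnNge (ltnW lt_vpq).
- by rewrite ltnNge (ltnW lt_pq) ltnn.
case: (ltngtP i p) => [lt_ip|lt_pi|/val_inj //]; first by rewrite (ltn_trans lt_ip lt_pq).
case: (ltnP i q) => //= lt_iq.
by rewrite ltnNge (ltnW (ltn_trans (below_vp lt_pi lt_iq) lt_vpq)).
Qed.

Lemma inv_entry_swap_other k :
  k != v p -> k != v q -> inv_entry u k = inv_entry v k.
Proof.
set r := (v^-1)%g k => ne_kp ne_kq.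
have ne_pr : p != r by apply: contraNneq ne_kp => ->; rewrite permKV.
have ne_qr : q != r by apply: contraNneq ne_kq => ->; rewrite permKV.
rewrite /inv_entry swapVE tpermD // -/r.
have [lt_qr | le_rq] := ltnP q r.
  rewrite -[RHS](card_preimset _ (@perm_inj _ (tperm p q))).
  apply: eq_card => i; rewrite !inE permM.
  by case: tpermP => [->|->|] //; rewrite lt_qr (ltn_trans lt_pq lt_qr).
apply: eq_card => i; rewrite !inE permM.
case: tpermP => [->|->|] //; last by rewrite !ltnNge le_rq.
case: ltnP => //= lt_pr.
have lt_rq : (r < q)%N by rewrite ltn_neqAle le_rq andbT eq_sym.
have lt_k : (k < v p)%N by rewrite -(permKV v k) below_vp.
by rewrite lt_k (ltn_trans lt_k lt_vpq).
Qed.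

Lemma inv_entry_swap k : inv_entry u k = inv_entry v k + (k == v p).
Proof.
have [->|ne_kp] := eqVneq k (v p); first by rewrite inv_entry_swap_vp addn1.
have [->|ne_kq] := eqVneq k (v q); first by rewrite inv_entry_swap_vq addn0.
by rewrite inv_entry_swap_other ?addn0.
Qed.

End Swap.

Lemma card_perm_gt v k : #|[set i | (k < v i)%N]| = #|[set j : 'I_n | (k < j)%N]|.
Proof.
rewrite -[RHS](card_preimset _ (@perm_inj _ v)).
by apply: eq_card => i; rewrite !inE.
Qed.

Lemma inv_entry_maximal v w k :
  (forall j, ((v^-1)%g k < j)%N -> (v j <= k)%N) ->
  (inv_entry w k <= inv_entry v k)%N.
Proof.
move=> after_k; apply: (@leq_trans #|[set i | (k < w i)%N]|).
  by apply/subset_leq_card/subsetP => i; rewrite !inE => /andP[].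
rewrite card_perm_gt -(card_perm_gt v).
apply/subset_leq_card/subsetP => i; rewrite !inE => lt_k; rewrite lt_k andbT.
have [//|gt_i|eq_i] := ltngtP i ((v^-1)%g k).
- by move: lt_k; rewrite ltnNge after_k.
- by move: lt_k; rewrite (val_inj eq_i) permKV ltnn.
Qed.

Lemma inv_covers_step v w k :
  (forall j, inv_entry w j = inv_entry v j + (j == k)) -> inv_covers v w.
Proof.
move=> step.
have le_vw : inv_le v w by move=> j; rewrite step leq_addr.
have ne_vw : v <> w by move=> eq_vw; have := step k; rewrite eq_vw eqxx addn1 => /n_Sn.
split=> // -[u [[le_vu ne_vu] [le_uw ne_uw]]].
have sandwich j : j != k -> inv_entry u j = inv_entry v j.
  move=> ne_jk; apply/eqP; rewrite eqn_leq le_vu andbT.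
  by have := le_uw j; rewrite step (negbTE ne_jk) addn0.
have [eq_k|ne_k] := eqVneq (inv_entry u k) (inv_entry v k).
- apply: ne_vu; apply: inv_entry_inj => j.
  by have [->|ne_jk] := eqVneq j k; rewrite ?eq_k ?sandwich.
- apply: ne_uw; apply: inv_entry_inj => j.
  have [->|ne_jk] := eqVneq j k; last by rewrite sandwich // step (negbTE ne_jk) addn0.
  by have := le_vu k; have := le_uw k; rewrite step eqxx; move: ne_k; lia.
Qed.

Lemma inv_covers_of_swap v p q :
  (p < q)%N -> (v p < v q)%N ->
  (forall j, (p < j)%N -> (j < q)%N -> (v j < v p)%N) ->
  inv_covers v (tperm p q * v)%g.
Proof.
move=> lt_pq lt_vpq below_vp; apply: (@inv_covers_step _ _ (v p)) => j.
exact: inv_entry_swap.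
Qed.

Lemma swap_of_inv_covers v w :
  inv_covers v w ->
  exists p q, [/\ (p < q)%N, (v p < v q)%N,
    forall j, (p < j)%N -> (j < q)%N -> (v j < v p)%N & w = (tperm p q * v)%g].
Proof.
case=> -[le_vw ne_vw] no_between.
have [k lt_k|all_ge] := pickP (fun k => inv_entry v k < inv_entry w k)%N; last first.
  case: ne_vw; apply: inv_entry_inj => k.
  by apply/eqP; rewrite eqn_leq le_vw leqNgt all_ge.
pose p := (v^-1)%g k; have vp : v p = k by rewrite permKV.
have [q0 q0P] : exists q, (p < q)%N && (k < v q)%N.
  apply/existsP; apply: contraLR lt_k => /existsPn none_after.
  rewrite -leqNgt; apply: inv_entry_maximal => j lt_pj.
  by have := none_after j; rewrite lt_pj -leqNgt.
case: (@arg_minnP _ q0 (fun j => (p < j) && (k < v j))%N val q0P).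
move=> q /andP[lt_pq lt_kq] q_min.
have below_vp j : (p < j)%N -> (j < q)%N -> (v j < v p)%N.
  move=> lt_pj lt_jq; have : ~~ (k < v j)%N.
    by apply: contraL lt_jq => lt_kj; rewrite -leqNgt q_min ?lt_pj.
  rewrite vp -leqNgt leq_eqVlt => /orP[/eqP/val_inj eq_jk|//].
  by move: lt_pj; rewrite /p -eq_jk permK ltnn.
have lt_vpq : (v p < v q)%N by rewrite vp.
have step j := inv_entry_swap lt_pq lt_vpq below_vp j.
exists p, q; split=> //.
have [//|ne_wu] := eqVneq w (tperm p q * v)%g.
have [[le_vu ne_vu] _] := inv_covers_of_swap lt_pq lt_vpq below_vp.
case: no_between; exists (tperm p q * v)%g; do 2!split=> //.
  move=> j; rewrite step vp; have [->|ne_jk] := eqVneq j k; first by rewrite addn1.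
  by rewrite addn0 le_vw.
by move=> eq_uw; rewrite eq_uw eqxx in ne_wu.
Qed.

End InversionTable.

Theorem proposition3p1 (n : nat) (v w : 'S_n) :
  inv_covers v w <->
  exists i k : 'I_n,
    (i < k)%N /\
    (forall j : 'I_n, j != i -> j != k -> w j = v j) /\
    (v i = w k /\ (w k < w i)%N /\ w i = v k) /\
    (forall j : 'I_n, (i < j)%N -> (j < k)%N -> (w j < w k)%N).
Proof.
split.
- case/swap_of_inv_covers=> p [q [lt_pq lt_vpq below_vp ->]].
  exists p, q; rewrite !permM tpermL tpermR; do !split=> //.
    by move=> j ne_jp ne_jq; rewrite permM tpermD // eq_sym.
  move=> j lt_pj lt_jq; have ne_pj : p != j by rewrite neq_ltn lt_pj.
  by rewrite permM tpermD ?below_vp // neq_ltn lt_jq orbT.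
case=> i [k [lt_ik [w_other [[vi_wk [lt_wki wi_vk]] below_wk]]]].
have -> : w = (tperm i k * v)%g.
  apply/permP => j; rewrite permM.
  by case: tpermP => [->|->|/eqP ne_ji /eqP ne_jk] //; apply: w_other.
apply: inv_covers_of_swap => //; first by rewrite vi_wk -wi_vk.
move=> j lt_ij lt_jk; rewrite vi_wk -(w_other j) ?below_wk //.
  by rewrite neq_ltn lt_ij orbT.
by rewrite neq_ltn lt_jk.
Qed.
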